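(* Let $P=\sum_{i=0}^Nq^iP_i(D)\in\mathbb{C}[q][D]$ with $D=q\frac{d}{dq}$ and $P_i\in\mathbb{C}[D]$. For $r\geq 0$ let $P^{(r)}=\sum_iq^iP_i^{(r)}(D)$, where $P_i^{(r)}$ is the $r$-th formal derivative of the polynomial $P_i$. Let $I=\sum_{i=0}^NI^ih^i$ with $I^i\in\mathbb{C}[[q]]$. Then $I$ is a perturbed solution of $P$ if and only if for every $0\leq s\leq N$ $$\frac{P^{(s)}(I^0)}{s!}+\frac{P^{(s-1)}(I^1)}{(s-1)!}+\cdots+P(I^s)=0.$$
   Context: Put $I_r=\sum_{m=0}^rI^{r-m}(q)\,t^m/m!\in\mathbb{C}[[q]][t]$. Operators in $\mathbb{C}[q][D]$ act on $\mathbb{C}[[q]][t]$ via $D(f(q)t^m)=qf'(q)t^m+mf(q)t^{m-1}$, with $q$ acting by multiplication. $I$ is a perturbed solution of $P$ if $PI_r=0$ for all $0\leq r\leq N$. *)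

(* Complex numbers are modelled as R[i] = complex R for R : realType. *)
From HB Require Import structures.
From mathcomp Require Import all_boot all_order all_algebra.
From mathcomp Require Export complex.
From mathcomp Require Export reals.
Set Implicit Arguments. Unset Strict Implicit. Unset Printing Implicit Defensive.
Import Order.TTheory GRing.Theory Num.Theory.
Local Open Scope ring_scope.

Section PerturbedDefs.
Variable K : fieldType.

Definition pseries := nat -> K.
(* An element of K[[q]][t], encoded by F m k = coefficient of q^k t^m. *)
Definition pseriest := nat -> nat -> K.

(* D (f(q) t^m) = q f'(q) t^m + m f(q) t^(m-1) *)
Definition Dop (F : pseriest) : pseriest :=
  fun m k => k%:R * F m k + m.+1%:R * F m.+1 k.

Definition qmul (F : pseriest) : pseriest :=
  fun m k => if k is k'.+1 then F m k' else 0.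

Definition polyD (p : {poly K}) (F : pseriest) : pseriest :=
  fun m k => \sum_(j < size p) p`_j * iter j Dop F m k.

Definition opapply (N : nat) (P : nat -> {poly K}) (F : pseriest) : pseriest :=
  fun m k => \sum_(i < N.+1) iter i qmul (polyD (P i) F) m k.

Definition opderiv (r : nat) (P : nat -> {poly K}) : nat -> {poly K} :=
  fun i => (P i)^`(r).

Definition embed (f : pseries) : pseriest :=
  fun m k => if m == 0%N then f k else 0.

Definition Ir (I : nat -> pseries) (r : nat) : pseriest :=
  fun m k => if (m <= r)%N then I (r - m)%N k / (m`!)%:R else 0.

Definition perturbed_solution (N : nat) (P : nat -> {poly K}) (I : nat -> pseries) :=
  forall r : nat, (r <= N)%N -> opapply N P (Ir I r) = (fun _ _ => 0).

End PerturbedDefs.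

(* In the basis t^m/m! the operator D acts on the coefficient of q^k as k + S,
   where S shifts the t-degree down by one; hence P_i(D) acts as
   P_i(k + S) = sum_l P_i^(l)(k)/l! S^l by Taylor's formula. Collecting the
   contributions of the I^j to the coefficient of q^k t^m/m! in P I_r gives the
   same expression as the coefficient of q^k in the s-th equation, s = r - m. *)
From HB Require Import structures.
From mathcomp Require Import all_boot all_order all_algebra complex reals.
From mathcomp Require Import ring.
From Stdlib Require Import FunctionalExtensionality.
Set Implicit Arguments. Unset Strict Implicit. Unset Printing Implicit Defensive.
Import Order.TTheory GRing.Theory Num.Theory.
Local Open Scope ring_scope.

Section ShiftHorner.
Variable K : nzRingType.
Implicit Types (q : {poly K}) (g : nat -> K).

(* The value at m of q(S) g, where S is the shift g |-> g \o succn. *)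
Definition shift_horner (q : {poly K}) (g : nat -> K) (m : nat) : K :=
  \sum_(l < size q) q`_l * g (m + l)%N.

Lemma shift_horner_widen n q g m : (size q <= n)%N ->
  shift_horner q g m = \sum_(l < n) q`_l * g (m + l)%N.
Proof.
move=> le_q_n; rewrite /shift_horner.
rewrite (big_ord_widen n (fun l => q`_l * g (m + l)%N)) // big_mkcond.
apply: eq_bigr => l _.
by case: ltnP => // /(nth_default 0) ->; rewrite mul0r.
Qed.

Lemma shift_horner0 g m : shift_horner 0 g m = 0.
Proof. by rewrite /shift_horner size_poly0 big_ord0. Qed.

Lemma shift_hornerD q1 q2 g m :
  shift_horner (q1 + q2) g m = shift_horner q1 g m + shift_horner q2 g m.
Proof.
pose n := maxn (size q1) (size q2).
rewrite !(@shift_horner_widen n) ?leq_maxl ?leq_maxr ?size_polyD //.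
by rewrite -big_split; apply: eq_bigr => l _; rewrite coefD mulrDl.
Qed.

Lemma shift_hornerZ c q g m :
  shift_horner (c *: q) g m = c * shift_horner q g m.
Proof.
rewrite (@shift_horner_widen (size q)) ?size_scale_leq // mulr_sumr.
by apply: eq_bigr => l _; rewrite coefZ mulrA.
Qed.

Lemma shift_hornerXM q g m : shift_horner ('X * q) g m = shift_horner q g m.+1.
Proof.
have le_Xq : (size ('X * q)%R <= (size q).+1)%N.
  by apply: leq_trans (size_polyMleq _ _) _; rewrite size_polyX.
rewrite (shift_horner_widen g m le_Xq) big_ord_recl coefXM /= mul0r add0r.
by apply: eq_bigr => l _; rewrite coefXM addnS.
Qed.

Lemma shift_horner_XaddC c q g m :
  shift_horner (('X + c%:P) * q) g m =
  c * shift_horner q g m + shift_horner q g m.+1.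
Proof.
by rewrite mulrDl shift_hornerD mul_polyC shift_hornerZ shift_hornerXM addrC.
Qed.

Lemma shift_horner_sum n (a : 'I_n -> K) (q : 'I_n -> {poly K}) g m :
  shift_horner (\sum_(i < n) a i *: q i) g m =
  \sum_(i < n) a i * shift_horner (q i) g m.
Proof.
rewrite (big_morph (fun p => shift_horner p g m)
  (fun p1 p2 => shift_hornerD p1 p2 g m) (shift_horner0 g m)).
by apply: eq_bigr => i _; rewrite shift_hornerZ.
Qed.

End ShiftHorner.

Lemma coef_comp_polyXaddC (K : comNzRingType) (p : {poly K}) c l :
  (p \Po ('X + c%:P))`_l = p^`N(l).[c].
Proof.
have taylor : p \Po ('X + c%:P) = \poly_(i < size p) p^`N(i).[c].
  rewrite /comp_poly addrC nderiv_taylor; last exact: commr_polyX.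
  rewrite size_map_polyC poly_def; apply: eq_bigr => i _.
  by rewrite nderivn_map horner_map mul_polyC.
rewrite taylor coef_poly; case: ltnP => // /nderivn_poly0 ->.
by rewrite horner0.
Qed.

Section DividedPowers.
Variable K : fieldType.
Implicit Types (p : {poly K}) (F : pseriest K).

(* Coordinates of F in the divided-power basis q^k t^m / m!. *)
Definition dpcoef (F : pseriest K) : pseriest K := fun m k => (m`!)%:R * F m k.

Lemma dpcoef_Dop F m k :
  dpcoef (Dop F) m k = k%:R * dpcoef F m k + dpcoef F m.+1 k.
Proof. by rewrite /dpcoef /Dop factS natrM; ring. Qed.

Lemma dpcoef_iter_Dop j F m k :
  dpcoef (iter j (@Dop K) F) m k =
  shift_horner (('X + k%:R%:P) ^+ j) (dpcoef F ^~ k) m.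
Proof.
elim: j m => [|j IHj] m.
  by rewrite expr0 /shift_horner size_poly1 big_ord1 coefC addn0 mul1r.
by rewrite iterS dpcoef_Dop !IHj exprS shift_horner_XaddC.
Qed.

Lemma dpcoef_polyD p F m k n : (size p <= n)%N ->
  dpcoef (polyD p F) m k = \sum_(l < n) p^`N(l).[k%:R] * dpcoef F (m + l)%N k.
Proof.
move=> le_p_n.
have -> : dpcoef (polyD p F) m k =
    shift_horner (p \Po ('X + k%:R%:P)) (dpcoef F ^~ k) m.
  rewrite comp_polyE shift_horner_sum /dpcoef /polyD mulr_sumr.
  by apply: eq_bigr => j _; rewrite mulrCA -dpcoef_iter_Dop.
rewrite (@shift_horner_widen _ n) ?size_comp_poly2 ?size_XaddC //.
by apply: eq_bigr => l _; rewrite coef_comp_polyXaddC.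
Qed.

Lemma polyD_embed p f k : polyD p (embed f) 0 k = p.[k%:R] * f k.
Proof.
have -> : polyD p (embed f) 0 k = dpcoef (polyD p (embed f)) 0 k.
  by rewrite /dpcoef mul1r.
rewrite (@dpcoef_polyD _ _ _ _ (size p).+1) //.
rewrite big_ord_recl big1 => [|l _]; last by rewrite /dpcoef /embed lift0 !mulr0.
by rewrite /dpcoef /embed nderivn0 mul1r addr0.
Qed.

Lemma iter_qmul i F m k :
  iter i (@qmul K) F m k = if (i <= k)%N then F m (k - i)%N else 0.
Proof. by elim: i k => [|i IHi] [|k] //=; rewrite ?subn0 // IHi. Qed.

Lemma opapplyE N P F m k :
  opapply N P F m k =
  \sum_(i < N.+1) if (i <= k)%N then polyD (P i) F m (k - i)%N else 0.
Proof. by apply: eq_bigr => i _; rewrite iter_qmul. Qed.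

End DividedPowers.

Section CharZero.
Variable K : fieldType.
Hypothesis charK : [pchar K] =i pred0.
Implicit Types (p : {poly K}) (F : pseriest K) (P : nat -> {poly K})
  (I : nat -> pseries K).

Lemma natf_fact_neq0 n : (n`!)%:R != 0 :> K.
Proof. by move/pcharf0P: charK => ->; rewrite -lt0n fact_gt0. Qed.

Lemma polyD_dpcoef p F m k : polyD p F m k = dpcoef (polyD p F) m k / (m`!)%:R.
Proof. by rewrite /dpcoef mulrAC divff ?mul1r ?natf_fact_neq0. Qed.

Lemma dpcoef_Ir I r m k :
  dpcoef (Ir I r) m k = if (m <= r)%N then I (r - m)%N k else 0.
Proof.
by rewrite /dpcoef /Ir; case: ifP; rewrite ?mulr0 // mulrC divfK ?natf_fact_neq0.
Qed.

(* The common value of the coefficient of q^k t^(r-s)/(r-s)! in P I_r and of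
   the coefficient of q^k in the s-th equation. *)
Definition perturbed_coef N P I s k :=
  \sum_(i < N.+1) if (i <= k)%N then
    \sum_(l < s.+1) (P i)^`N(l).[(k - i)%N%:R] * I (s - l)%N (k - i)%N
  else 0.

Lemma polyD_Ir p I r m x :
  polyD p (Ir I r) m x =
  if (m <= r)%N then
    (\sum_(l < (r - m)%N.+1) p^`N(l).[x%:R] * I (r - m - l)%N x) / (m`!)%:R
  else 0.
Proof.
pose n := (size p + r).+1.
rewrite polyD_dpcoef (@dpcoef_polyD _ _ _ _ _ n) ?leqW ?leq_addr //.
under eq_bigr do rewrite dpcoef_Ir.
case: leqP => [le_m_r | lt_r_m]; last first.
  rewrite big1 ?mul0r // => l _.
  by rewrite leqNgt (leq_trans lt_r_m) ?leq_addr ?mulr0.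
congr (_ / _).
rewrite (big_ord_widen n (fun l => p^`N(l).[x%:R] * I (r - m - l)%N x));
  last by rewrite ltnS (leq_trans (leq_subr _ _)) ?leq_addl.
rewrite [RHS]big_mkcond; apply: eq_bigr => l _.
by rewrite ltnS leq_subRL // subnDA; case: ifP; rewrite ?mulr0.
Qed.

Lemma opapply_Ir N P I r m k :
  opapply N P (Ir I r) m k =
  if (m <= r)%N then perturbed_coef N P I (r - m)%N k / (m`!)%:R else 0.
Proof.
rewrite opapplyE /perturbed_coef.
case: ifP => le_m_r; last by apply: big1 => i _; rewrite polyD_Ir le_m_r if_same.
rewrite mulr_suml; apply: eq_bigr => i _.
by case: ifP; rewrite ?mul0r // polyD_Ir le_m_r.
Qed.

Lemma sum_opapply_opderiv_embed N P I s k :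
  \sum_(j < s.+1)
    opapply N (opderiv (s - j)%N P) (embed (I j)) 0%N k / ((s - j)`!)%:R =
  perturbed_coef N P I s k.
Proof.
under eq_bigr do rewrite opapplyE mulr_suml.
rewrite exchange_big; apply: eq_bigr => i _.
case: ifP => _; last by rewrite big1 // => j _; rewrite mul0r.
rewrite (reindex_inj rev_ord_inj); apply: eq_bigr => j _.
rewrite polyD_embed /opderiv nderivn_def hornerMn /= subSS subKn ?leq_ord //.
by rewrite -mulr_natr mulrAC mulfK ?natf_fact_neq0.
Qed.

End CharZero.

Theorem theorem4p1 (R : realType) (N : nat) (P : nat -> {poly R[i]})
    (I : nat -> pseries R[i]) :
  perturbed_solution N P I <->
  (forall s : nat, (s <= N)%N ->
     (fun k : nat => \sum_(j < s.+1)
        opapply N (opderiv (s - j)%N P) (embed (I j)) 0%N k / ((s - j)`!)%:R)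
     = (fun _ => 0)).
Proof.
have charC := @pchar_num R[i].
split=> [sol s le_s_N | eqs r le_r_N].
- apply: functional_extensionality => k.
  have := opapply_Ir charC N P I s 0%N k.
  by rewrite (sol s le_s_N) subn0 divr1 (sum_opapply_opderiv_embed charC).
- apply: functional_extensionality => m; apply: functional_extensionality => k.
  rewrite (opapply_Ir charC); case: ifP => // _.
  have le_rm_N := leq_trans (leq_subr m r) le_r_N.
  have /(congr1 (fun f => f k)) := eqs (r - m)%N le_rm_N.
  by move=> /= E; rewrite -(sum_opapply_opderiv_embed charC) E mul0r.
Qed.
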